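(* Let $\Delta\subset G_{2m}$ be an open bounded set with $(\overline\Delta-\overline\Delta)\cap{\rm Sp}\,U=\{0\}$, and let $\Delta_1,\Delta_2\subset H_m$ be compact, disjoint, with $\Delta_1+\Delta_2\subset\Delta$. Then there exist disjoint open neighbourhoods $O_1,O_2\subset\mathbb{R}^{1+d}$ of $\Delta_1,\Delta_2$ respectively such that for all compact $K_1,K_2\subset\mathbb{R}^{1+d}$ with $-K_i\subset O_i$ and $-K_i\cap{\rm Sp}\,U\subset\Delta_i$ ($i=1,2$) one has: $(\overline\Delta+K_1+K_2)\cap{\rm Sp}\,U\subset\{0\}$; $-(K_1+K_2)\subset\Delta$; $(\Delta_i+K_i)\cap{\rm Sp}\,U\subset\{0\}$ for $i=1,2$; and $(\Delta_i+K_j)\cap{\rm Sp}\,U=\emptyset$ for $i\ne j$.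
   Context: ${\rm Sp}\,U\subset\mathbb{R}^{1+d}$ is a set of the form $\{0\}\cup H_m\cup G_\mu$ with $H_m=\{(E,p)\in\mathbb{R}^{1+d}:E=\sqrt{p^2+m^2}\}$, $G_\mu=\{(E,p):E\ge\sqrt{p^2+\mu^2}\}$, $0<m<\mu\le2m$ (it is the joint spectrum of the energy-momentum operators of a translation representation $U$). $G_{2m}$ is $G_\mu$ with $\mu=2m$. *)

(* Points of R^{1+d} are row vectors 'rV[R]_(d.+1):
   coordinate 0 is the energy E, coordinates 1..d the momentum p. *)
From HB Require Import structures.
From mathcomp Require Import all_boot all_order all_algebra.
From mathcomp Require Import all_classical all_reals all_analysis.
Set Implicit Arguments. Unset Strict Implicit. Unset Printing Implicit Defensive.
Import Order.TTheory GRing.Theory Num.Theory.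
Import numFieldNormedType.Exports.
Local Open Scope classical_set_scope.
Local Open Scope ring_scope.

Section Defs.
Variables (R : realType) (d : nat).
Definition pt := 'rV[R]_(d.+1).

Definition energy (x : pt) : R := x 0 ord0.
Definition psq (x : pt) : R := \sum_(i < d) (x 0 (lift ord0 i)) ^+ 2.

Definition Hm (m : R) : set pt := [set x | energy x = Num.sqrt (psq x + m ^+ 2)].
Definition Gmu (mu : R) : set pt := [set x | Num.sqrt (psq x + mu ^+ 2) <= energy x].
Definition SpU (m mu : R) : set pt := [set 0] `|` Hm m `|` Gmu mu.

Definition minksum (A B : set pt) : set pt := [set x + y | x in A & y in B].
Definition minkdiff (A B : set pt) : set pt := [set x - y | x in A & y in B].
Definition minkneg (A : set pt) : set pt := [set - x | x in A].
End Defs.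

From HB Require Import structures.
From mathcomp Require Import all_boot all_order all_algebra.
From mathcomp Require Import all_classical all_reals all_analysis.
From mathcomp Require Import ring lra.
Import Order.TTheory GRing.Theory Num.Theory.
Import numFieldNormedType.Exports.
Set Implicit Arguments. Unset Strict Implicit. Unset Printing Implicit Defensive.
Local Open Scope classical_set_scope.
Local Open Scope ring_scope.

(* For a, b on the mass shell H_m, the triangle inequality for the Euclidean
   norm of momenta gives E_a - E_b <= |p_a - p_b| < sqrt (|p_a - p_b|^2 + m^2):
   a - b lies in the open set where E < sqrt (p^2 + m^2), which meets Sp U only
   in 0.  By compactness of D_1 and D_2 this, the inclusion D_1 + D_2 ⊆ Δ and
   the disjointness of D_1 and D_2 all survive with a uniform margin e > 0; the
   sets O_i are the e-thickenings of D_i, and the conclusions follow by set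
   algebra, writing a + k = a - (-k) with -k close to D_1 ∪ D_2. *)

Section EuclideanSums.
Variables (R : rcfType) (I : Type) (r : seq I).
Implicit Types u v : I -> R.

Lemma lagrange_identity u v :
  \sum_(i <- r) \sum_(j <- r) (u i * v j - u j * v i) ^+ 2 =
  2 * ((\sum_(i <- r) u i ^+ 2) * (\sum_(i <- r) v i ^+ 2)
       - (\sum_(i <- r) u i * v i) ^+ 2).
Proof.
transitivity (\sum_(i <- r) \sum_(j <- r)
    (u i ^+ 2 * v j ^+ 2 + v i ^+ 2 * u j ^+ 2 - 2 * (u i * v i * (u j * v j)))).
  by apply: eq_bigr => i _; apply: eq_bigr => j _; ring.
under eq_bigr => i _ do rewrite sumrB big_split -!mulr_sumr.
by rewrite sumrB big_split -mulr_sumr -!mulr_suml /= expr2; ring.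
Qed.

Lemma sum_sqr_ge0 u : 0 <= \sum_(i <- r) u i ^+ 2.
Proof. by apply: sumr_ge0 => i _; exact: sqr_ge0. Qed.

Lemma cauchy_schwarz_sum u v :
  \sum_(i <- r) u i * v i <=
  Num.sqrt (\sum_(i <- r) u i ^+ 2) * Num.sqrt (\sum_(i <- r) v i ^+ 2).
Proof.
have sqr_le : (\sum_(i <- r) u i * v i) ^+ 2 <=
              (\sum_(i <- r) u i ^+ 2) * (\sum_(i <- r) v i ^+ 2).
  rewrite -subr_ge0 -(@pmulr_rge0 _ 2) // -lagrange_identity.
  by apply: sumr_ge0 => i _; exact: sum_sqr_ge0.
rewrite -sqrtrM ?sum_sqr_ge0 //; apply: le_trans (ler_norm _) _.
by rewrite -sqrtr_sqr ler_sqrt // mulr_ge0 ?sum_sqr_ge0.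
Qed.

Lemma minkowski_sum u v :
  Num.sqrt (\sum_(i <- r) (u i + v i) ^+ 2) <=
  Num.sqrt (\sum_(i <- r) u i ^+ 2) + Num.sqrt (\sum_(i <- r) v i ^+ 2).
Proof.
have rhs0 : 0 <= Num.sqrt (\sum_(i <- r) u i ^+ 2) + Num.sqrt (\sum_(i <- r) v i ^+ 2).
  by rewrite addr_ge0 ?sqrtr_ge0.
rewrite -(ger0_norm rhs0) -sqrtr_sqr ler_sqrt ?sqr_ge0 //.
rewrite sqrrD !sqr_sqrtr ?sum_sqr_ge0 //.
rewrite (eq_bigr (fun i => u i ^+ 2 + 2 * (u i * v i) + v i ^+ 2)) => [|i _]; last by ring.
rewrite !big_split /= -mulr_sumr lerD2r lerD2l.
by have := cauchy_schwarz_sum u v; lra.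
Qed.

End EuclideanSums.

Lemma sqrt_sqrD_le (R : rcfType) (x y c : R) : 0 <= x -> 0 <= y ->
  Num.sqrt ((x + y) ^+ 2 + c ^+ 2) <= x + Num.sqrt (y ^+ 2 + c ^+ 2).
Proof.
move=> x0 y0; have yc0 : 0 <= y ^+ 2 + c ^+ 2 by rewrite addr_ge0 ?sqr_ge0.
have y_le : y <= Num.sqrt (y ^+ 2 + c ^+ 2).
  by rewrite -[leLHS](ger0_norm y0) -sqrtr_sqr ler_sqrt // lerDl sqr_ge0.
have rhs0 : 0 <= x + Num.sqrt (y ^+ 2 + c ^+ 2) by rewrite addr_ge0 ?sqrtr_ge0.
rewrite -(ger0_norm rhs0) -sqrtr_sqr ler_sqrt ?sqr_ge0 // [leRHS]sqrrD sqr_sqrtr //.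
nra.
Qed.

Section Kinematics.
Variables (R : realType) (d : nat).
Local Notation pt := 'rV[R]_(d.+1).
Implicit Types (m mu : R) (x y a b : pt).

Definition pnorm x : R := Num.sqrt (psq x).

Lemma psq_ge0 x : 0 <= psq x.
Proof. exact: sum_sqr_ge0. Qed.

Lemma psqE x : psq x = pnorm x ^+ 2.
Proof. by rewrite /pnorm sqr_sqrtr ?psq_ge0. Qed.

Lemma pnorm_ge0 x : 0 <= pnorm x.
Proof. exact: sqrtr_ge0. Qed.

Lemma pnormD x y : pnorm (x + y) <= pnorm x + pnorm y.
Proof. by rewrite /pnorm /psq; under eq_bigr => i _ do rewrite mxE; exact: minkowski_sum. Qed.

Definition shell_gap m x : R := energy x - Num.sqrt (psq x + m ^+ 2).

Lemma continuous_shell_gap m : continuous (shell_gap m).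
Proof.
have coord i : continuous (fun x : pt => x 0 i).
  by move=> x; exact: (@coord_continuous R 1 d.+1 0 i x).
have cpsq : continuous (@psq R d).
  move=> x; apply: (@continuous_big _ _ +%R 0 xpredT add_continuous) => i _ y.
  by apply: cvgM; [exact: nbhs_filter|exact (coord _ y)|exact (coord _ y)].
move=> x; apply: cvgB; [exact: nbhs_filter|exact (coord _ x)|].
apply: continuous_comp; last exact: sqrt_continuous.
by apply: cvgD; [exact: nbhs_filter|exact (cpsq x)|apply: cvg_cst; exact: nbhs_filter].
Qed.

Lemma open_shell_gap_lt0 m : open [set y : pt | shell_gap m y < 0].
Proof.
have := @open_comp _ R _ [set r | r < 0] (fun y _ => @continuous_shell_gap m y).
by apply; exact: open_lt.
Qed.

Lemma SpU_shell_gap_ge0 m mu y : 0 <= m -> m <= mu -> SpU m mu y -> y != 0 ->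
  0 <= shell_gap m y.
Proof.
move=> m0 mmu [[->|Hy]|Gy]; rewrite ?eqxx // => _; rewrite subr_ge0 /=.
  by rewrite Hy.
apply: le_trans Gy; rewrite ler_sqrt; last by rewrite addr_ge0 ?psq_ge0 ?sqr_ge0.
by rewrite lerD2l ler_sqr ?nnegrE ?(le_trans m0).
Qed.

Lemma SpU_shell_gap_lt0 m mu : 0 <= m -> m <= mu ->
  SpU m mu `&` [set y | shell_gap m y < 0] `<=` [set 0].
Proof.
move=> m0 mmu y [Sy gy]; apply/eqP; apply: contraLR gy => y0.
by rewrite -leNgt; exact: SpU_shell_gap_ge0 Sy y0.
Qed.

Lemma shell_gap_sub_lt0 m a b : 0 < m -> Hm m a -> Hm m b -> shell_gap m (a - b) < 0.
Proof.
move=> m0; rewrite /Hm /shell_gap /= => Ea Eb.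
have -> : energy (a - b) = energy a - energy b by rewrite /energy !mxE.
rewrite Ea Eb !psqE subr_lt0 ltrBlDr.
set n := pnorm (a - b); have n0 : 0 <= n := pnorm_ge0 _.
have pa : pnorm a <= n + pnorm b by rewrite -{1}(subrK b a) pnormD.
have m2 : 0 < m ^+ 2 by exact: exprn_gt0.
have n_lt : n < Num.sqrt (n ^+ 2 + m ^+ 2).
  by rewrite -[ltLHS](ger0_norm n0) -sqrtr_sqr ltr_sqrt ?ltrDl // ltr_wpDl ?sqr_ge0.
apply: (le_lt_trans (y := Num.sqrt ((n + pnorm b) ^+ 2 + m ^+ 2))).
  by rewrite ler_sqrt ?addr_ge0 ?sqr_ge0 // lerD2r ler_sqr ?nnegrE ?addr_ge0 ?pnorm_ge0.
apply: le_lt_trans (sqrt_sqrD_le m n0 (pnorm_ge0 b)) _.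
by rewrite ltrD2r.
Qed.

End Kinematics.

Section Thickening.
Context {R : realType} {V : normedModType R}.
Implicit Types (A B K U : set V) (e : R).

Definition thicken A e : set V := [set x | exists2 a, A a & `|a - x| < e].

Lemma open_thicken A e : open (thicken A e).
Proof.
have -> : thicken A e = \bigcup_(a in A) ball a e.
  by apply/seteqP; split => x [a Aa]; rewrite -ball_normE; exists a.
by apply: bigcup_open => a _; exact: ball_open.
Qed.

Lemma sub_thicken A e : 0 < e -> A `<=` thicken A e.
Proof. by move=> e0 a Aa; exists a; rewrite // subrr normr0. Qed.

Lemma thickenS A B e : A `<=` B -> thicken A e `<=` thicken B e.
Proof. by move=> AB x [a Aa ax]; exists a => //; exact: AB. Qed.

Lemma thicken_le A e e' : e <= e' -> thicken A e `<=` thicken A e'.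
Proof. by move=> ee' x [a Aa ax]; exists a => //; exact: lt_le_trans ee'. Qed.

Lemma compact_thicken_sub K U : compact K -> open U -> K `<=` U ->
  exists2 e, 0 < e & thicken K e `<=` U.
Proof.
move=> /compact_near_coveringP cK oU KU.
have : \forall e \near 0^'+, K `<=` (fun k => forall x, `|k - x| < e -> U x).
  apply: cK => k /KU Uk.
  have /nbhs_ballP[r r0 kr] : nbhs k U by exact: open_nbhs_nbhs.
  near=> k' e.
  have er : e < r / 2 by near: e; apply: nbhs_right_lt; rewrite divr_gt0.
  move=> x k'x; apply: kr; rewrite -ball_normE /=.
  have -> : k - x = (k - k') + (k' - x) by rewrite addrA subrK.
  rewrite (splitr r); apply: le_lt_trans (ler_normD _ _) _; apply: ltrD.
    by near: k'; apply/nbhs_normP; exists (r / 2) => //=; rewrite divr_gt0.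
  exact: lt_trans k'x er.
move=> Kmargin; near (0 : R)^'+ => e.
exists e; first by near: e; exact: nbhs_right_gt.
by move=> x [k Kk kx]; exact: (near Kmargin e) kx.
Unshelve. all: by end_near. Qed.

End Thickening.

Section MinkowskiSets.
Variables (R : realType) (d : nat).
Local Notation pt := 'rV[R]_(d.+1).
Implicit Types S A B C D K O : set pt.

Lemma minksumS A A' B B' : A `<=` A' -> B `<=` B' -> minksum A B `<=` minksum A' B'.
Proof. by move=> AA' BB' _ [a Aa [b Bb <-]]; exists a; [exact: AA'|exists b; [exact: BB'|]]. Qed.

Lemma minkdiffS A A' B B' : A `<=` A' -> B `<=` B' -> minkdiff A B `<=` minkdiff A' B'.
Proof. by move=> AA' BB' _ [a Aa [b Bb <-]]; exists a; [exact: AA'|exists b; [exact: BB'|]]. Qed.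

Lemma minksumA A B C : minksum (minksum A B) C = minksum A (minksum B C).
Proof.
apply/seteqP; split => z.
  move=> [w [a Aa [b Bb <-]] [c Cc <-]]; exists a => //.
  by exists (b + c); [exists b => //; exists c|rewrite addrA].
move=> [a Aa [w [b Bb [c Cc <-]] <-]].
by exists (a + b); [exists a => //; exists b|exists c; rewrite ?addrA].
Qed.

Lemma minksumE A B : minksum A B = minkdiff A (minkneg B).
Proof.
apply/seteqP; split => z [a Aa].
  by move=> [b Bb <-]; exists a => //; exists (- b); [exists b|rewrite opprK].
by move=> [y [b Bb <-] <-]; exists a => //; exists b; rewrite ?opprK.
Qed.

Lemma minkneg_minksum A B : minkneg (minksum A B) = minksum (minkneg A) (minkneg B).
Proof.
apply/seteqP; split => z.
  move=> [w [a Aa [b Bb <-]] <-]; exists (- a); first by exists a.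
  by exists (- b); [exists b|rewrite opprD].
move=> [x [a Aa <-] [y [b Bb <-] <-]].
by exists (a + b); [exists a => //; exists b|rewrite opprD].
Qed.

Lemma compact_minksum A B : compact A -> compact B -> compact (minksum A B).
Proof.
move=> cA cB; have -> : minksum A B = (fun p => p.1 + p.2) @` (A `*` B).
  apply/seteqP; split => z; first by move=> [a Aa [b Bb <-]]; exists (a, b).
  by move=> [[a b] [Aa Bb] <-]; exists a => //; exists b.
exact/continuous_compact/compact_setX/cB/cA/continuous_subspaceT/add_continuous.
Qed.

Lemma compact_minkdiff A B : compact A -> compact B -> compact (minkdiff A B).
Proof.
move=> cA cB; have -> : minkdiff A B = (fun p => p.1 - p.2) @` (A `*` B).
  apply/seteqP; split => z; first by move=> [a Aa [b Bb <-]]; exists (a, b).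
  by move=> [[a b] [Aa Bb] <-]; exists a => //; exists b.
exact/continuous_compact/compact_setX/cB/cA/continuous_subspaceT/sub_continuous.
Qed.

Lemma minksum_thicken A B e1 e2 :
  minksum (thicken A e1) (thicken B e2) `<=` thicken (minksum A B) (e1 + e2).
Proof.
move=> z [x [a Aa ax] [y [b Bb b_y] <-]]; exists (a + b); first by exists a => //; exists b.
by rewrite opprD addrACA; apply: le_lt_trans (ler_normD _ _) _; exact: ltrD.
Qed.

Lemma minkdiff_thicken A B e1 e2 :
  minkdiff (thicken A e1) (thicken B e2) `<=` thicken (minkdiff A B) (e1 + e2).
Proof.
move=> z [x [a Aa ax] [y [b Bb b_y] <-]]; exists (a - b); first by exists a => //; exists b.
have -> : a - b - (x - y) = (a - x) + (y - b).
  by rewrite opprB addrACA [RHS]addrACA [- x + _]addrC.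
rewrite -(normrN (b - y)) opprB in b_y.
by apply: le_lt_trans (ler_normD _ _) _; exact: ltrD.
Qed.

Lemma minksum_sub0 S D O A K :
  minkdiff D O `&` S `<=` [set 0] -> A `<=` D -> minkneg K `<=` O ->
  minksum A K `&` S `<=` [set 0].
Proof.
move=> DO AD KO z; rewrite minksumE => -[zAK Sz].
by apply: DO; split => //; exact: minkdiffS zAK.
Qed.

Lemma minksum_eq0 S D O A K :
  minkdiff D O `&` S `<=` [set 0] -> A `<=` D -> minkneg K `<=` O ->
  A `&` minkneg K = set0 -> minksum A K `&` S = set0.
Proof.
move=> DO AD KO AK; apply/seteqP; split => // z [zAK Sz].
have := minksum_sub0 DO AD KO (conj zAK Sz).
case: zAK => a Aa [k Kk <-] /= /eqP; rewrite addr_eq0 => /eqP ak.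
have : (A `&` minkneg K) a by split => //; exists k.
by rewrite AK.
Qed.

End MinkowskiSets.

Section Margins.
Variables (R : realType) (d : nat).
Local Notation pt := 'rV[R]_(d.+1).

Lemma open_neq0 : open (~` [set 0 : pt]).
Proof. exact/closed_openC/accessible_closed_set1/hausdorff_accessible/norm_hausdorff. Qed.

Lemma shell_margin m (D : set pt) : 0 < m -> compact D -> D `<=` Hm m ->
  exists2 e, 0 < e & thicken (minkdiff D D) e `<=` [set y | shell_gap m y < 0].
Proof.
move=> m0 cD hD.
apply: compact_thicken_sub (compact_minkdiff cD cD) (@open_shell_gap_lt0 R d m) _.
by move=> _ [a Da [b Db <-]]; exact: shell_gap_sub_lt0 m0 (hD _ Da) (hD _ Db).
Qed.

Lemma disjoint_margin (D1 D2 : set pt) :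
  compact D1 -> compact D2 -> D1 `&` D2 = set0 ->
  exists2 e, 0 < e & thicken (minkdiff D1 D2) e `<=` ~` [set 0].
Proof.
move=> cD1 cD2 dj.
apply: compact_thicken_sub (compact_minkdiff cD1 cD2) (@open_neq0) _.
move=> _ [a D1a [b D2b <-]] /subr0_eq ab.
have : (D1 `&` D2) a by split; rewrite // ab.
by rewrite dj.
Qed.

Lemma exists_shell_nbhds m mu (Delta D1 D2 : set pt) :
  0 < m -> m <= mu -> open Delta ->
  D1 `<=` Hm m -> D2 `<=` Hm m -> compact D1 -> compact D2 ->
  D1 `&` D2 = set0 -> minksum D1 D2 `<=` Delta ->
  exists O1 O2 : set pt,
    [/\ open O1, open O2, D1 `<=` O1, D2 `<=` O2 & O1 `&` O2 = set0] /\
    minksum O1 O2 `<=` Delta /\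
    minkdiff (D1 `|` D2) (O1 `|` O2) `&` SpU m mu `<=` [set 0].
Proof.
move=> m0 mmu oDelta hD1 hD2 cD1 cD2 dj hs; set D := D1 `|` D2.
have hD : D `<=` Hm m by move=> x [/hD1|/hD2].
have [e1 e10 e1_gap] := shell_margin m0 (compactU cD1 cD2) hD.
have [e2 e20 e2_Delta] := compact_thicken_sub (compact_minksum cD1 cD2) oDelta hs.
have [e3 e30 e3_neq0] := disjoint_margin cD1 cD2 dj.
pose e := Num.min e1 (Num.min e2 e3) / 2.
have e0 : 0 < e by rewrite divr_gt0 // !lt_min e10 e20 e30.
have [le1 le2 le3] : [/\ e + e <= e1, e + e <= e2 & e + e <= e3].
  by rewrite /e -splitr !ge_min !lexx ?orbT.
exists (thicken D1 e), (thicken D2 e); split.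
  split; [exact: open_thicken|exact: open_thicken|exact: sub_thicken|exact: sub_thicken|].
  apply/seteqP; split => //; move=> x [D1x D2x].
  apply: (e3_neq0 (x - x)); last by rewrite subrr.
  by apply/(thicken_le le3)/minkdiff_thicken; exists x => //; exists x.
split; first by move=> z /minksum_thicken /(thicken_le le2) /e2_Delta.
move=> z [zdiff Sz]; apply: SpU_shell_gap_lt0 (ltW m0) mmu _ (conj Sz _).
apply/e1_gap/(thicken_le le1)/minkdiff_thicken; apply: minkdiffS zdiff.
  exact: sub_thicken.
by move=> x [|]; apply: thickenS => y; [left|right].
Qed.

End Margins.

Theorem lemma7p3 (R : realType) (d : nat) (m mu : R)
  (hm : 0 < m) (hmmu : m < mu) (hmu2 : mu <= 2 * m)
  (Delta D1 D2 : set 'rV[R]_(d.+1)) :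
  open Delta -> bounded_set Delta -> Delta `<=` Gmu (2 * m) ->
  minkdiff (closure Delta) (closure Delta) `&` SpU m mu = [set 0] ->
  D1 `<=` Hm m -> D2 `<=` Hm m -> compact D1 -> compact D2 ->
  D1 `&` D2 = set0 -> minksum D1 D2 `<=` Delta ->
  exists O1 O2 : set 'rV[R]_(d.+1),
    [/\ open O1, open O2, D1 `<=` O1, D2 `<=` O2 & O1 `&` O2 = set0] /\
    forall K1 K2 : set 'rV[R]_(d.+1),
      compact K1 -> compact K2 ->
      minkneg K1 `<=` O1 -> minkneg K2 `<=` O2 ->
      minkneg K1 `&` SpU m mu `<=` D1 -> minkneg K2 `&` SpU m mu `<=` D2 ->
      minksum (minksum (closure Delta) K1) K2 `&` SpU m mu `<=` [set 0] /\
      minkneg (minksum K1 K2) `<=` Delta /\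
      minksum D1 K1 `&` SpU m mu `<=` [set 0] /\
      minksum D2 K2 `&` SpU m mu `<=` [set 0] /\
      minksum D1 K2 `&` SpU m mu = set0 /\
      minksum D2 K1 `&` SpU m mu = set0.
Proof.
move=> oDelta _ _ hdiff hD1 hD2 cD1 cD2 dj hs.
have [U1 [U2 [[oU1 oU2 DU1 DU2 U12] [U12_Delta DU_shell]]]] :=
  exists_shell_nbhds hm (ltW hmmu) oDelta hD1 hD2 cD1 cD2 dj hs.
exists U1, U2; split => // K1 K2 _ _ KU1 KU2 _ _.
have KDelta : minkneg (minksum K1 K2) `<=` Delta.
  by rewrite minkneg_minksum; apply: subset_trans U12_Delta; exact: minksumS.
have D1D : D1 `<=` D1 `|` D2 by move=> ? ?; left.
have D2D : D2 `<=` D1 `|` D2 by move=> ? ?; right.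
have KU1' : minkneg K1 `<=` U1 `|` U2 by move=> ? /KU1; left.
have KU2' : minkneg K2 `<=` U1 `|` U2 by move=> ? /KU2; right.
split.
  rewrite minksumA minksumE -hdiff; apply: setSI; apply: minkdiffS => //.
  exact: subset_trans KDelta (@subset_closure _ _).
split; first exact: KDelta.
split; first exact: minksum_sub0 DU_shell D1D KU1'.
split; first exact: minksum_sub0 DU_shell D2D KU2'.
split.
  by apply: minksum_eq0 DU_shell D1D KU2' _; rewrite -subset0 -U12; exact: setISS.
by apply: minksum_eq0 DU_shell D2D KU1' _; rewrite -subset0 -U12 setIC; exact: setISS.
Qed.
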